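(* In the setting below, let $\tilde B_\circ$ be the $m\times n$ extended exchange matrix of the initial seed $(\mathbf{x}(t_\circ),\mathbf{y}(t_\circ),B(t_\circ))$ of the original pattern. Then the new initial seed $(\bar{\mathbf x}(t_\circ),\bar{\mathbf y}(t_\circ),B(t_\circ))$ has extended exchange matrix $\overline{\tilde B}_\circ=\Psi\tilde B_\circ$, where $\Psi=(\psi_{ij})$ is the $\bar m\times m$ integer matrix defined by $\psi(x_j)=\prod_{i=1}^{\bar m}\bar x_i^{\psi_{ij}}$. Setting: $n\le m$, $n\le\bar m$; $\mathcal F,\bar{\mathcal F}$ are the fields of rational functions in $x_1,\dots,x_m$ and $\bar x_1,\dots,\bar x_{\bar m}$; $\varphi:\mathbb{Q}_{\mathrm{sf}}(x_1,\dots,x_m)\to\mathrm{Trop}(\bar x_{n+1},\dots,\bar x_{\bar m})$ is a semifield homomorphism; $\psi:\mathbb{Q}_{\mathrm{sf}}(x_1,\dots,x_m)\to\mathbb{Q}_{\mathrm{sf}}(\bar x_1,\dots,\bar x_{\bar m})$ is the semifield homomorphism with $\psi(x_i)=\bar x_i\varphi(x_i)$ for $i\le n$, $\psi(x_i)=\varphi(x_i)$ for $i>n$; $(\mathbf{x}(t),\mathbf{y}(t),B(t))_{t\in\mathbb{T}_n}$ is a seed pattern in $\mathcal F$ with frozen variables $x_{n+1},\dots,x_m$ and initial cluster $\mathbf{x}(t_\circ)=(x_1,\dots,x_n)$; and $\bar x_{i;t}=\psi(x_{i;t})/\varphi(x_{i;t})$, $\bar y_{k;t}=\varphi(y_{k;t})\prod_{i=1}^n\varphi(x_{i;t})^{b^t_{ik}}$,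 which form a seed pattern in $\bar{\mathcal F}$ with frozen variables $\bar x_{n+1},\dots,\bar x_{\bar m}$.
   Context: $\mathbb{Q}_{\mathrm{sf}}(u_1,\dots,u_l)$ is the semifield of subtraction-free rational expressions; $\mathrm{Trop}(u_1,\dots,u_l)$ is the group of Laurent monomials with $\prod u_j^{a_j}\oplus\prod u_j^{b_j}=\prod u_j^{\min(a_j,b_j)}$. A seed pattern in $\mathcal F$ with frozen variables $x_{n+1},\dots,x_m$ assigns to each vertex $t$ of the $n$-regular tree $\mathbb{T}_n$ (edges labeled $1,\dots,n$, distinct labels at each vertex) a triple $(\mathbf{x}(t),\mathbf{y}(t),B(t))$ with $\mathbf{x}(t)=(x_{1;t},\dots,x_{n;t})$ such that $x_{1;t},\dots,x_{n;t},x_{n+1},\dots,x_m$ freely generate $\mathcal F$, $\mathbf y(t)=(y_{1;t},\dots,y_{n;t})\in\mathrm{Trop}(x_{n+1},\dots,x_m)^n$, $B(t)=(b^t_{ij})$ skew-symmetrizable, related along each edge $t\overset{k}{-}t'$ by matrix mutation $\mu_k$, tropical $y$-mutation ($y_{k;t'}=y_{k;t}^{-1}$, $y_{j;t'}=y_{j;t}y_{k;t}^{\max(b^t_{kj},0)}(y_{k;t}\oplus1)^{-b^t_{kj}}$ for $j\neq k$), $x_{i;t'}=x_{i;t}$ ($i\ne k$) and $x_{k;t}x_{k;t'}=(y_{k;t}\prod_{b^t_{ik}>0}x_{i;t}^{b^t_{ik}}+\prod_{b^t_{ik}<0}x_{i;t}^{-b^t_{ik}})/(y_{k;t}\oplus1)$.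 The extended exchange matrix of a seed $(\mathbf x,\mathbf y,B)$ with frozen variables $x_{n+1},\dots,x_m$ is the $m\times n$ matrix $\tilde B=(b_{ik})$ whose top $n\times n$ part is $B$ and whose remaining entries are determined by $y_k=\prod_{i=n+1}^m x_i^{b_{ik}}$ (and analogously with $\bar m$ and $\bar x_i$ for the new pattern). *)

From HB Require Import structures.
From mathcomp Require Import all_boot all_order all_algebra.
From mathcomp Require Import fraction.
From mathcomp Require Import mpoly.
Set Implicit Arguments. Unset Strict Implicit. Unset Printing Implicit Defensive.
Import Order.TTheory GRing.Theory Num.Theory.
Local Open Scope ring_scope.

Definition ratfun (N : nat) := {fraction {mpoly rat[N]}}.

Definition rvar (N : nat) (i : 'I_N) : ratfun N := @FracField.tofrac _ ('X_i).

(* Q_sf(u_1,...,u_N): the rational functions given by subtraction-free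
   rational expressions in the variables (closure of {1, u_i} under +, *, /). *)
Inductive subfree (N : nat) : ratfun N -> Prop :=
| sf_one : subfree 1
| sf_var (i : 'I_N) : subfree (rvar i)
| sf_add a b : subfree a -> subfree b -> subfree (a + b)
| sf_mul a b : subfree a -> subfree b -> subfree (a * b)
| sf_inv a : subfree a -> subfree a^-1.

(* Trop(u_{n+1},...,u_{n+q}): Laurent monomials prod_i u_{n+i}^{e_i},
   represented by their exponent vectors e : 'rV[int]_q. *)
Definition Trop (q : nat) := 'rV[int]_q.
Definition tmul q (a b : Trop q) : Trop q := a + b.
Definition tinv q (a : Trop q) : Trop q := - a.
Definition tone q : Trop q := 0.
Definition texp q (a : Trop q) (z : int) : Trop q := a *~ z.
Definition tadd q (a b : Trop q) : Trop q :=
  \row_j Num.min (a 0 j) (b 0 j).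
Definition tprod q (I : finType) (F : I -> Trop q) : Trop q := \sum_i F i.

Definition trop_embed (n q : nat) (e : Trop q) : ratfun (n + q) :=
  \prod_(i < q) (rvar (rshift n i)) ^ (e 0 i).

Definition sf_hom_trop (N q : nat) (f : ratfun N -> Trop q) : Prop :=
  [/\ f 1 = tone q,
      forall a b, subfree a -> subfree b -> f (a + b) = tadd (f a) (f b),
      forall a b, subfree a -> subfree b -> f (a * b) = tmul (f a) (f b)
    & forall a, subfree a -> f a^-1 = tinv (f a)].

Definition sf_hom (N M : nat) (f : ratfun N -> ratfun M) : Prop :=
  [/\ forall a, subfree a -> subfree (f a),
      f 1 = 1,
      forall a b, subfree a -> subfree b -> f (a + b) = f a + f b,
      forall a b, subfree a -> subfree b -> f (a * b) = f a * f b
    & forall a, subfree a -> f a^-1 = (f a)^-1].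

Definition skew_symmetrizable (n : nat) (B : 'M[int]_n) : Prop :=
  exists d : 'I_n -> int, (forall i, 0 < d i) /\
    forall i j, d i * B i j = - (d j * B j i).

(* Extended exchange matrix of a seed (x, y, B) with frozen variables indexed by
   the last p variables: top part B, bottom entries b_{n+i,k} determined by
   y_k = prod_i x_{n+i}^{b_{n+i,k}}. *)
Definition ext_exchange (n p : nat) (B : 'M[int]_n) (y : 'I_n -> Trop p)
  : 'M[int]_(n + p, n) :=
  col_mx B (\matrix_(i < p, k < n) (y k) 0 i).

Definition new_coeffs (n p q : nat) (phi : ratfun (n + p) -> Trop q)
  (B : 'M[int]_n) (y : 'I_n -> Trop p) : 'I_n -> Trop q :=
  fun k => tmul (phi (trop_embed n (y k)))
                (tprod (fun i : 'I_n => texp (phi (rvar (lshift p i))) (B i k))).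

From HB Require Import structures.
From mathcomp Require Import all_boot all_order all_algebra.
From mathcomp Require Import fraction.
From mathcomp Require Import mpoly.
From mathcomp Require Import zify.
Import Order.TTheory GRing.Theory Num.Theory.
Local Open Scope ring_scope.
Set Implicit Arguments. Unset Strict Implicit. Unset Printing Implicit Defensive.

(* The columns of Psi are the exponent vectors of the Laurent monomials psi(x_j), and a
   Laurent monomial determines its exponents.  The hypotheses on psi thus force
   Psi = [[1, 0], [Phi]], where column j of Phi is the exponent vector of phi(x_j).  The top
   block of Psi * B~ reproduces B; its bottom block Phi * B~ is the exponent vector of
   ybar_k = phi(y_k) prod_i phi(x_i)^(b_ik), because phi, being a semifield homomorphism
   into Trop, turns the monomial y_k in the frozen x's into the linear combination
   sum_j phi(x_(n+j)) b_(n+j,k). *)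

Definition int_pos (z : int) : nat := if z is Posz k then k else 0.
Definition int_neg (z : int) : nat := if z is Negz k then k.+1 else 0.

Lemma int_posBneg (z : int) : z = (int_pos z)%:Z - (int_neg z)%:Z.
Proof. by case: z => k //=; rewrite ?subr0 // NegzE sub0r. Qed.

Lemma exprz_posBneg (F : fieldType) (x : F) (z : int) :
  x ^ z = x ^+ int_pos z / x ^+ int_neg z.
Proof. by case: z => k /=; rewrite ?expr0 ?invr1 ?mulr1 ?mul1r. Qed.

Lemma mpolyX_inj (N : nat) (R : nzRingType) : injective (fun m => 'X_[m] : {mpoly R[N]}).
Proof. by move=> m m' /(congr1 (@msupp N R)); rewrite !msuppX => -[]. Qed.

Lemma mpolyX_neq0 (N : nat) (R : nzRingType) (m : 'X_{1..N}) : ('X_[m] : {mpoly R[N]}) != 0.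
Proof. by apply/eqP => /(congr1 (@msupp N R)); rewrite msuppX msupp0. Qed.

Section LaurentMonomials.

Variable N : nat.

Definition laurent (e : 'I_N -> int) : ratfun N := \prod_(i < N) rvar i ^ e i.

Let mnm_of (e : 'I_N -> nat) : 'X_{1..N} := [multinom e i | i < N].

Lemma laurentE (e : 'I_N -> int) :
  laurent e = tofrac 'X_[mnm_of (int_pos \o e)] / tofrac 'X_[mnm_of (int_neg \o e)].
Proof.
rewrite !mpolyXE_id !rmorph_prod -prodf_div; apply: eq_bigr => i _.
by rewrite !mnmE !rmorphXn exprz_posBneg.
Qed.

Lemma laurent_inj (a b : 'I_N -> int) : laurent a = laurent b -> a =1 b.
Proof.
rewrite !laurentE => /eqP; rewrite eqr_div ?tofrac_eq0 ?mpolyX_neq0 //.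
rewrite -!tofracM tofrac_eq -!mpolyXD => /eqP /mpolyX_inj /mnmP eq_ab i.
move: (eq_ab i); rewrite !mnmDE !mnmE /= => eq_i.
rewrite (int_posBneg (a i)) (int_posBneg (b i)); lia.
Qed.

End LaurentMonomials.

Lemma laurent_row_mx (n q : nat) (u : 'rV[int]_n) (v : 'rV[int]_q) :
  laurent (row_mx u v 0) = \prod_(i < n) rvar (lshift q i) ^ u 0 i * trop_embed n v.
Proof.
by rewrite /laurent big_split_ord; congr (_ * _); apply: eq_bigr => i _;
  rewrite (row_mxEl, row_mxEr).
Qed.

Lemma laurent_delta_row_mx (n q : nat) (l : 'I_n) (v : 'rV[int]_q) :
  laurent (row_mx (delta_mx 0 l) v 0) = rvar (lshift q l) * trop_embed n v.
Proof.
rewrite laurent_row_mx (bigD1 l) //= big1 ?mulr1 => [|i /negbTE neq_il].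
  by rewrite mxE !eqxx expr1z.
by rewrite mxE neq_il andbF expr0z.
Qed.

Lemma laurent_0_row_mx (n q : nat) (v : 'rV[int]_q) :
  laurent (row_mx (0 : 'rV[int]_n) v 0) = trop_embed n v.
Proof. by rewrite laurent_row_mx big1 ?mul1r // => i _; rewrite mxE expr0z. Qed.

Lemma subfree_exprn (N : nat) (a : ratfun N) (k : nat) : subfree a -> subfree (a ^+ k).
Proof. by move=> sf_a; elim: k => [|k IHk]; [exact: sf_one | rewrite exprS; exact: sf_mul]. Qed.

Lemma subfree_exprz (N : nat) (a : ratfun N) (z : int) : subfree a -> subfree (a ^ z).
Proof. by case: z => k sf_a /=; [|apply: sf_inv]; exact: subfree_exprn. Qed.

Section TropicalHom.

Variables (N q : nat) (phi : ratfun N -> Trop q).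
Hypothesis phi_hom : sf_hom_trop phi.

Lemma sf_hom_trop_exprz (a : ratfun N) (z : int) :
  subfree a -> phi (a ^ z) = phi a *~ z.
Proof.
have [phi1 _ phiM phiV] := phi_hom; move=> sf_a.
have phiXn k : phi (a ^+ k) = phi a *+ k.
  elim: k => [|k IHk]; first by rewrite expr0 phi1.
  by rewrite exprS phiM ?IHk ?mulrS //; exact: subfree_exprn.
by case: z => k /=; rewrite ?phiV ?phiXn //; exact: subfree_exprn.
Qed.

Lemma sf_hom_trop_prod (k : nat) (F : 'I_k -> ratfun N) (e : 'I_k -> int) :
  (forall i, subfree (F i)) ->
  phi (\prod_(i < k) F i ^ e i) = \sum_(i < k) phi (F i) *~ e i.
Proof.
have [phi1 _ phiM _] := phi_hom; move=> sf_F.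
pose P s t := subfree s /\ phi s = t.
suff [] : P (\prod_(i < k) F i ^ e i) (\sum_(i < k) phi (F i) *~ e i) by [].
apply: (big_rec2 P) => [|i s t _ [sf_s <-]]; first by split; [exact: sf_one|].
have sf_Fe := subfree_exprz (e i) (sf_F i).
by split; [exact: sf_mul | rewrite phiM ?sf_hom_trop_exprz].
Qed.

End TropicalHom.

Definition trop_exponent_mx (N q : nat) (phi : ratfun N -> Trop q) : 'M[int]_(q, N) :=
  \matrix_(i, j) phi (rvar j) 0 i.

Lemma exponent_mx_block (n p q : nat) (phi : ratfun (n + p) -> Trop q)
    (psi : ratfun (n + p) -> ratfun (n + q)) (Psi : 'M[int]_(n + q, n + p)) :
  (forall l : 'I_n,
     psi (rvar (lshift p l)) = rvar (lshift q l) * trop_embed n (phi (rvar (lshift p l)))) ->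
  (forall j : 'I_p, psi (rvar (rshift n j)) = trop_embed n (phi (rvar (rshift n j)))) ->
  (forall j, psi (rvar j) = laurent (Psi ^~ j)) ->
  Psi = col_mx (row_mx 1%:M 0) (trop_exponent_mx phi).
Proof.
move=> psi_cluster psi_frozen psi_laurent.
have Psi_cluster l : Psi ^~ (lshift p l) =1 row_mx (delta_mx 0 l) (phi (rvar (lshift p l))) 0.
  by apply: laurent_inj; rewrite -psi_laurent laurent_delta_row_mx.
have Psi_frozen j : Psi ^~ (rshift n j) =1 row_mx 0 (phi (rvar (rshift n j))) 0.
  by apply: laurent_inj; rewrite -psi_laurent laurent_0_row_mx.
apply/matrixP => i j; rewrite -[j]splitK -[i]splitK.
case: (split j) => j' /=; rewrite ?Psi_cluster ?Psi_frozen;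
  case: (split i) => i' /=; rewrite ?(row_mxEl, row_mxEr, col_mxEu, col_mxEd) !mxE //.
Qed.

Lemma mulmxzE (R : zmodType) (m k : nat) (A : 'M[R]_(m, k)) (z : int) i j :
  (A *~ z) i j = A i j *~ z.
Proof. by case: z => d /=; rewrite ?mxE mulmxnE. Qed.

Lemma new_coeffs_mx (n p q : nat) (phi : ratfun (n + p) -> Trop q)
    (B : 'M[int]_n) (y : 'I_n -> Trop p) :
  sf_hom_trop phi ->
  \matrix_(i < q, k < n) new_coeffs phi B y k 0 i = trop_exponent_mx phi *m ext_exchange B y.
Proof.
move=> phi_hom; apply/matrixP => i k; rewrite !mxE.
rewrite /new_coeffs /tmul /tprod /texp /trop_embed sf_hom_trop_prod //; last first.
  by move=> j; exact: sf_var.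
rewrite big_split_ord !summxE addrC; congr (_ + _); apply: eq_bigr => j _.
  by rewrite /ext_exchange col_mxEu !mxE mulmxzE mulrzz.
by rewrite /ext_exchange col_mxEd !mxE mulmxzE mulrzz.
Qed.

Theorem proposition4p3p5 (n p q : nat)
  (phi : ratfun (n + p) -> Trop q)
  (psi : ratfun (n + p) -> ratfun (n + q))
  (B : 'M[int]_n) (y : 'I_n -> Trop p)
  (Psi : 'M[int]_(n + q, n + p)) :
  sf_hom_trop phi ->
  sf_hom psi ->
  (forall i : 'I_n,
     psi (rvar (lshift p i)) = rvar (lshift q i) * trop_embed n (phi (rvar (lshift p i)))) ->
  (forall i : 'I_p,
     psi (rvar (rshift n i)) = trop_embed n (phi (rvar (rshift n i)))) ->
  skew_symmetrizable B ->
  (forall j : 'I_(n + p),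
     psi (rvar j) = \prod_(i < n + q) (rvar i) ^ (Psi i j)) ->
  ext_exchange B (new_coeffs phi B y) = Psi *m ext_exchange B y.
Proof.
move=> phi_hom _ psi_cluster psi_frozen _ psi_laurent.
rewrite (exponent_mx_block psi_cluster psi_frozen psi_laurent) mul_col_mx.
by rewrite {3}/ext_exchange mul_row_col mul1mx mul0mx addr0 -new_coeffs_mx.
Qed.
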